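(* Let $\Lambda=K\mathcal{Q}/I$ be a finite-dimensional algebra over a field $K$ as in the context, let $A\geqslant1$, let $\tilde{\Lambda}=\tilde{\Lambda}_A$ be its stretched algebra and $\varepsilon=\sum_{v\in\mathcal{Q}_0}v\in\tilde{\Lambda}$. For an arrow $\alpha$ of $\mathcal{Q}$ with new vertices $w_1,\dots,w_{A-1}$, let $$X_\alpha=\big(\tilde{\Lambda}w_1\tilde{\Lambda}+\cdots+\tilde{\Lambda}w_{A-1}\tilde{\Lambda}+\tilde{\Lambda}\varepsilon\tilde{\Lambda}\big)/\tilde{\Lambda}\varepsilon\tilde{\Lambda}.$$ Then $\dim_KX_\alpha=A(A-1)/2$, and $\dim_K\tilde{\Lambda}/\langle\varepsilon\rangle=m_1A(A-1)/2$, where $m_1$ is the number of arrows of $\mathcal{Q}$ and $\langle\varepsilon\rangle=\tilde{\Lambda}\varepsilon\tilde{\Lambda}$.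
   Context: Conventions: $\mathcal{Q}$ is a finite quiver with vertex set $\mathcal{Q}_0$; $\mathfrak{o}(\alpha)$, $\mathfrak{t}(\alpha)$ denote start and end of an arrow; paths are written left to right. An element $x\in K\mathcal{Q}$ is uniform if $x=vx=xv'$ for vertices $v,v'$. $\Lambda=K\mathcal{Q}/I$ is finite-dimensional with $I$ an admissible ideal generated by a minimal set $\{g^2_1,\dots,g^2_m\}$ of uniform elements. Stretched algebra: for $A\geqslant1$, the quiver $\tilde{\mathcal{Q}}_A$ has all vertices of $\mathcal{Q}$ plus, for each arrow $\alpha$ of $\mathcal{Q}$, new vertices $w_1,\dots,w_{A-1}$; each arrow $\alpha$ is replaced by arrows $\alpha_1,\dots,\alpha_A$ with $\mathfrak{o}(\alpha_1)=\mathfrak{o}(\alpha)$, $\mathfrak{t}(\alpha_j)=\mathfrak{o}(\alpha_{j+1})=w_j$ ($1\le j\le A-1$), $\mathfrak{t}(\alpha_A)=\mathfrak{t}(\alpha)$, and the only arrows incident with $w_j$ are $\alpha_j,\alpha_{j+1}$. $\theta^*:K\mathcal{Q}\to K\tilde{\mathcal{Q}}_A$ is the algebra homomorphism fixing vertices and sending $\alpha\mapsto\alpha_1\cdots\alpha_A$; $\tilde{I}_A$ is the ideal generated by $\theta^*(g^2_1),\dots,\theta^*(g^2_m)$; $\tilde{\Lambda}_A=K\tilde{\mathcal{Q}}_A/\tilde{I}_A$. *)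

From HB Require Import structures.
From mathcomp Require Import all_boot all_algebra finmap.
From mathcomp Require Import monalg.

Set Implicit Arguments.
Unset Strict Implicit.
Unset Printing Implicit Defensive.

Import GRing.Theory.
Local Open Scope ring_scope.

Section Quiver.
Variables (V E : finType) (src tgt : E -> V).

Definition is_qpath (x : V * seq E) : bool :=
  if x.2 is a :: es then (src a == x.1) && path (fun a b => tgt a == src b) a es
  else true.

Definition qpath := {x : V * seq E | is_qpath x}.

Definition pend (x : V * seq E) : V := last x.1 (map tgt x.2).

Definition pcat (x y : V * seq E) : option (V * seq E) :=
  if pend x == y.1 then Some (x.1, x.2 ++ y.2) else None.

Definition plen (p : qpath) : nat := size (val p).2.

Variable F : fieldType.

Definition KQ := {malg F[qpath]}.

Definition pb (x : V * seq E) : KQ :=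
  if insub x is Some p then << p >> else 0.

Definition mulq (f g : KQ) : KQ :=
  \sum_(p <- msupp f) \sum_(q <- msupp g)
     (f@_p * g@_q) *: (if pcat (val p) (val q) is Some r then pb r else 0).

Definition vertex (v : V) : KQ := pb (v, [::]).

Definition uniform (x : KQ) : Prop :=
  exists v v' : V, x = mulq (vertex v) x /\ x = mulq x (vertex v').

Definition ideal_gen (P : KQ -> Prop) : KQ -> Prop := fun f =>
  exists ts : seq (KQ * KQ * KQ),
    (forall t, t \in ts -> P t.1.2) /\
    f = \sum_(t <- ts) mulq (mulq t.1.1 t.1.2) t.2.

Definition arrow_ideal_pow (k : nat) : KQ -> Prop :=
  ideal_gen (fun f => exists p : qpath, plen p = k /\ f = << p >>).

Definition admissible (I : KQ -> Prop) : Prop :=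
  exists m, (2 <= m)%N /\ (forall f, arrow_ideal_pow m f -> I f) /\
            (forall f, I f -> arrow_ideal_pow 2 f).

Definition minimal_gens (g : seq KQ) : Prop :=
  forall S : seq KQ, {subset S <= g} ->
    (forall f, ideal_gen (fun x => x \in g) f -> ideal_gen (fun x => x \in S) f) ->
    {subset g <= S}.

End Quiver.

(* Dimension of a quotient U / W of subspaces W <= U of an F-vector    *)
(* space M: dim_F (U/W) = n iff there are v_1..v_n in U whose classes  *)
(* form a basis of U/W (independent modulo W, spanning U modulo W).    *)
Definition quot_dim (F : fieldType) (M : lmodType F) (U W : M -> Prop)
    (n : nat) : Prop :=
  exists v : 'I_n -> M,
    (forall i, U (v i)) /\
    (forall c : 'I_n -> F, W (\sum_i c i *: v i) -> forall i, c i = 0) /\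
    (forall u, U u -> exists c : 'I_n -> F, W (u - \sum_i c i *: v i)).

(* Stretched quiver, with n = A - 1.  New vertices: (alpha, k), k : 'I_n *)
(* (0-based; (alpha,k) is w_{k+1} of the paper).  New arrows           *)
(* (alpha, j), j : 'I_(n+1) (0-based; (alpha,j) is alpha_{j+1}).       *)
Section Stretch.
Variables (V E : finType) (src tgt : E -> V) (n : nat).

Definition sV : finType := (V + (E * 'I_n))%type.
Definition sE : finType := (E * 'I_n.+1)%type.

Definition ssrc (e : sE) : sV :=
  match unlift ord0 e.2 with
  | Some k => inr (e.1, k)
  | None => inl (src e.1)
  end.

Definition stgt (e : sE) : sV :=
  match unlift ord_max e.2 with
  | Some k => inr (e.1, k)
  | None => inl (tgt e.1)
  end.

Definition stretch_path (x : V * seq E) : sV * seq sE :=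
  (inl x.1, flatten [seq [seq (a, j) | j <- enum 'I_n.+1] | a <- x.2]).

Variable F : fieldType.

Definition theta (f : KQ src tgt F) : KQ ssrc stgt F :=
  \sum_(p <- msupp f) f@_p *: pb ssrc stgt F (stretch_path (val p)).

Definition eps : KQ ssrc stgt F := \sum_(v : V) vertex ssrc stgt F (inl v).

Definition wvert (alpha : E) (k : 'I_n) : KQ ssrc stgt F :=
  vertex ssrc stgt F (inr (alpha, k)).

End Stretch.

From Pilot Require Import Defs.
From HB Require Import structures.
From mathcomp Require Import all_boot all_algebra finmap.
From mathcomp Require Import monalg.
From mathcomp Require Import zify.

(* An element of F Q~ lies in the ideal <eps> + I~ exactly when it vanishes on
   every path avoiding the original vertices of Q: eps and the theta(g) are
   combinations of paths through original vertices, a property stable under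
   multiplication, and conversely a path through an original vertex v factors
   as p v q with v a summand of eps.  A path avoiding the original vertices
   stays inside one stretched arrow alpha, as w_k alpha_(k+1) ... alpha_(k+l)
   with 1 <= k <= k + l <= A - 1, which gives A(A-1)/2 paths per arrow; their
   classes form a basis of F Q~ / (<eps> + I~).  Those on alpha form a basis
   of X_alpha, since every element of the ideal generated by the w_k and eps
   is supported on paths meeting alpha or an original vertex. *)

Set Implicit Arguments.
Unset Strict Implicit.
Unset Printing Implicit Defensive.
Import GRing.Theory.
Local Open Scope ring_scope.

(* [rat] exports another [mulq]. *)
Local Notation mulq := Defs.mulq.

Section MalgMonomials.
Variables (K : choiceType) (R : nzRingType).

Lemma malgZU (c : R) (k : K) : c *: << k >> = << c *g k >> :> {malg R[K]}.
Proof. by apply/malgP => k'; rewrite mcoeffZ !mcoeffU mulr_natr. Qed.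

Lemma mcoeff_sumU (s : seq K) (u : {malg R[K]}) k : uniq s ->
  (\sum_(p <- s) << u@_p *g p >>)@_k = if k \in s then u@_k else 0.
Proof.
move=> us; rewrite raddf_sum /=; under eq_bigr do rewrite mcoeffU.
case: ifP => ks.
  by rewrite (bigD1_seq k) //= eqxx big1 ?addr0 // => p /negbTE ->; rewrite mulr0n.
by rewrite big_seq big1 // => p ps; case: eqP ks => // <-; rewrite ps.
Qed.

End MalgMonomials.

Section PathAlgebra.
Variables (V E : finType) (src tgt : E -> V) (F : fieldType).
Local Notation P := (qpath src tgt).
Local Notation M := (KQ src tgt F).
Local Notation pb := (pb src tgt F).
Local Notation vertex := (vertex src tgt F).
Implicit Types (c : F) (f g : M) (p q r : P).

Definition pmul p q : M :=
  if pcat tgt (val p) (val q) is Some x then pb x else 0.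

Lemma mulqEw f g (d1 d2 : {fset P}) :
  (msupp f `<=` d1)%fset -> (msupp g `<=` d2)%fset ->
  mulq f g = \sum_(p <- d1) \sum_(q <- d2) (f@_p * g@_q) *: pmul p q.
Proof.
move=> le1 le2; rewrite /Defs.mulq (big_fset_incl _ le1) /=; last first.
  by move=> p _ /mcoeff_outdom ->; apply: big1 => q _; rewrite mul0r scale0r.
apply: eq_bigr => p _; rewrite (big_fset_incl _ le2) //= => q _ /mcoeff_outdom ->.
by rewrite mulr0 scale0r.
Qed.

Lemma mulq0r f : mulq f 0 = 0.
Proof.
by apply: big1 => p _; apply: big1 => q _; rewrite mcoeff0 mulr0 scale0r.
Qed.

Lemma mulqDr f g1 g2 : mulq f (g1 + g2) = mulq f g1 + mulq f g2.
Proof.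
rewrite !(@mulqEw _ _ (msupp f) (msupp g1 `|` msupp g2)%fset)
  ?fsubset_refl ?fsubsetUl ?fsubsetUr ?msuppD_le //.
rewrite -big_split; apply: eq_bigr => p _; rewrite -big_split.
by apply: eq_bigr => q _; rewrite mcoeffD mulrDr scalerDl.
Qed.

Lemma mulq_sumr f (I : Type) (s : seq I) (G : I -> M) :
  mulq f (\sum_(i <- s) G i) = \sum_(i <- s) mulq f (G i).
Proof.
elim: s => [|i s IH]; first by rewrite !big_nil mulq0r.
by rewrite !big_cons mulqDr IH.
Qed.

Lemma mulqUU (c d : F) p q : mulq << c *g p >> << d *g q >> = (c * d) *: pmul p q.
Proof.
rewrite (@mulqEw _ _ [fset p]%fset [fset q]%fset) ?msuppU_le //.
by rewrite !big_seq_fset1 !mcoeffUU.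
Qed.

Lemma pb_val p : pb (val p) = << p >>.
Proof. by rewrite /Defs.pb valK. Qed.

Lemma vertexE u : vertex u = << exist _ (u, [::]) isT : P >>.
Proof. by rewrite /Defs.vertex /Defs.pb insubT. Qed.

Lemma mcoeff_pb_neq0 x r : (pb x)@_r != 0 -> val r = x.
Proof.
rewrite /Defs.pb; case: insubP => [p _ <-|_]; last by rewrite mcoeff0 eqxx.
rewrite mcoeffU; have [->//|ne] := eqVneq p r.
by rewrite mulr0n eqxx.
Qed.

Lemma mcoeff_mulq_eq0 f g r :
  (forall p q, p \in msupp f -> q \in msupp g ->
     pcat tgt (val p) (val q) <> Some (val r)) -> (mulq f g)@_r = 0.
Proof.
move=> no_cat; rewrite raddf_sum /= big_seq big1 // => p pf.
rewrite raddf_sum /= big_seq big1 // => q qg; rewrite mcoeffZ /pmul.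
case Epq: pcat => [x|]; last by rewrite mcoeff0 mulr0.
have [->|/mcoeff_pb_neq0 ex] := eqVneq (pb x)@_r 0; first by rewrite mulr0.
by case: (no_cat p q pf qg); rewrite Epq ex.
Qed.

Lemma qpath_cons v a es :
  is_qpath src tgt (v, a :: es) = (src a == v) && is_qpath src tgt (tgt a, es).
Proof. by case: es => [|b es] //; rewrite /is_qpath /= (eq_sym (tgt a)). Qed.

Lemma qpath_cat v es1 es2 : is_qpath src tgt (v, es1 ++ es2) =
  is_qpath src tgt (v, es1) && is_qpath src tgt (pend tgt (v, es1), es2).
Proof. by elim: es1 v => [|a es1 IH] v //; rewrite cat_cons !qpath_cons IH andbA. Qed.

Lemma mulq_vertexU u c q :
  mulq (vertex u) << c *g q >> = if u == (val q).1 then << c *g q >> else 0.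
Proof.
rewrite vertexE mulqUU mul1r /pmul /pcat /pend /=.
case: q => [[v es] hq] /=; case: eqP => [->|_]; last by rewrite scaler0.
by rewrite (pb_val (exist _ (v, es) hq)) malgZU.
Qed.

Lemma mulqU_vertex u c q :
  mulq << c *g q >> (vertex u) = if pend tgt (val q) == u then << c *g q >> else 0.
Proof.
rewrite vertexE mulqUU mulr1 /pmul /pcat /=.
case: q => [[v es] hq] /=; case: eqP => _; last by rewrite scaler0.
by rewrite cats0 (pb_val (exist _ (v, es) hq)) malgZU.
Qed.

Lemma mulq_vertex_idem u : mulq (vertex u) (vertex u) = vertex u.
Proof. by rewrite {2 3}vertexE mulq_vertexU eqxx. Qed.

Lemma mulqU_vertex_sum (I : finType) (f : I -> V) c q :
  injective f -> pend tgt (val q) \in codom f ->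
  mulq << c *g q >> (\sum_i vertex (f i)) = << c *g q >>.
Proof.
move=> inj_f /codomP [i ei]; rewrite mulq_sumr (bigD1 i) //= big1 ?addr0.
  by rewrite mulqU_vertex ei eqxx.
by move=> j ne; rewrite mulqU_vertex ei (inj_eq inj_f) eq_sym (negbTE ne).
Qed.

Lemma ideal_gen0 (Q : M -> Prop) : ideal_gen Q 0.
Proof. by exists [::]; rewrite big_nil. Qed.

Lemma ideal_genD (Q : M -> Prop) f g :
  ideal_gen Q f -> ideal_gen Q g -> ideal_gen Q (f + g).
Proof.
move=> [t1 [Q1 ->]] [t2 [Q2 ->]]; exists (t1 ++ t2); rewrite big_cat.
by split=> // t; rewrite mem_cat => /orP [/Q1|/Q2].
Qed.

Lemma ideal_gen_sum (Q : M -> Prop) (I : eqType) (s : seq I) (G : I -> M) :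
  (forall i, i \in s -> ideal_gen Q (G i)) -> ideal_gen Q (\sum_(i <- s) G i).
Proof.
elim: s => [|i s IH] QG; first by rewrite big_nil; apply: ideal_gen0.
rewrite big_cons; apply: ideal_genD; first by apply: QG; rewrite mem_head.
by apply: IH => j js; apply: QG; rewrite in_cons js orbT.
Qed.

Lemma ideal_gen_mulq (Q : M -> Prop) x f g :
  Q x -> ideal_gen Q (mulq (mulq f x) g).
Proof.
by move=> Qx; exists [:: (f, x, g)]; rewrite big_seq1; split=> // t /[!inE] /eqP ->.
Qed.

Definition pverts (x : V * seq E) : seq V := x.1 :: map tgt x.2.

Lemma has_pverts_pcat (h : pred V) x y z : pcat tgt x y = Some z ->
  has h (pverts z) = has h (pverts x) || has h (pverts y).
Proof.
rewrite /pcat; case: eqP => // xy [<-].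
have h_end : h (pend tgt x) -> has h (pverts x).
  by move=> hx; apply/hasP; exists (pend tgt x) => //; apply: mem_last.
move: h_end; rewrite /pverts /= map_cat has_cat -xy.
by case: (h (pend tgt x)); case: (h x.1); case: (has h (map tgt x.2))
  => //= /(_ isT).
Qed.

Definition supp_through (h : pred V) f : Prop :=
  forall r, ~~ has h (pverts (val r)) -> f@_r = 0.

Section SuppThrough.
Variable h : pred V.

Lemma supp_through_mulql f g : supp_through h f -> supp_through h (mulq f g).
Proof.
move=> hf r hr; apply: mcoeff_mulq_eq0 => p q pf _ /(has_pverts_pcat h).
rewrite (negbTE hr) => /esym/norP [hp _].
by move: pf; rewrite -mcoeff_neq0 hf ?eqxx.
Qed.

Lemma supp_through_mulqr f g : supp_through h g -> supp_through h (mulq f g).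
Proof.
move=> hg r hr; apply: mcoeff_mulq_eq0 => p q _ qg /(has_pverts_pcat h).
rewrite (negbTE hr) => /esym/norP [_ hq].
by move: qg; rewrite -mcoeff_neq0 hg ?eqxx.
Qed.

Lemma supp_through_sum (I : eqType) (s : seq I) (G : I -> M) :
  (forall i, i \in s -> supp_through h (G i)) -> supp_through h (\sum_(i <- s) G i).
Proof. by move=> hG r hr; rewrite raddf_sum big_seq big1 // => i /hG; apply. Qed.

Lemma supp_through_scale c f : supp_through h f -> supp_through h (c *: f).
Proof. by move=> hf r hr; rewrite mcoeffZ hf ?mulr0. Qed.

Lemma supp_through_pb x : has h (pverts x) -> supp_through h (pb x).
Proof. by move=> hx r; apply: contraNeq => /mcoeff_pb_neq0 ->. Qed.

Lemma supp_through_ideal_gen (Q : M -> Prop) f :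
  (forall x, Q x -> supp_through h x) -> ideal_gen Q f -> supp_through h f.
Proof.
move=> hQ [ts [Qts ->]]; apply: supp_through_sum => t /Qts /hQ ht.
exact/supp_through_mulql/supp_through_mulqr.
Qed.

Lemma supp_through_sub (h' : pred V) f :
  subpred h h' -> supp_through h f -> supp_through h' f.
Proof. by move=> hh' hf r hr; apply: hf; apply: contra hr; apply: sub_has. Qed.

End SuppThrough.

Lemma malgU_split_at c r u : u \in pverts (val r) ->
  exists r1 r2 : P,
    pend tgt (val r1) = u /\ << c *g r >> = mulq << c *g r1 >> << r2 >>.
Proof.
case: r => [[v es] hr] /= hu.
have [es1 [es2 [ees end1]]] :
    exists es1 es2, es = es1 ++ es2 /\ pend tgt (v, es1) = u.
  move: hu; rewrite /pverts /= in_cons => /orP [/eqP ->|/mapP [e ein ->]].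
    by exists [::], es.
  case/splitPr: ein => s1 s2.
  exists (rcons s1 e), s2; split; first by rewrite cat_rcons.
  by rewrite /pend /= map_rcons last_rcons.
subst es; have /andP [hr1 hr2] :
    is_qpath src tgt (v, es1) && is_qpath src tgt (u, es2).
  by rewrite -end1 -qpath_cat.
exists (exist _ (v, es1) hr1), (exist _ (u, es2) hr2); split=> //.
rewrite mulqUU mulr1 /pmul /pcat /= end1 eqxx.
by rewrite (pb_val (exist _ (v, es1 ++ es2) hr)) malgZU.
Qed.

(* A path through a vertex [f i] factors through it, and [vertex (f i)] is
   the only summand of [\sum_i vertex (f i)] not killing the first factor. *)
Lemma ideal_gen_supp_through (I : finType) (f : I -> V) (h : pred V)
    (Q : M -> Prop) x :
  injective f -> (forall v, h v -> v \in codom f) -> Q (\sum_i vertex (f i)) ->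
  supp_through h x -> ideal_gen Q x.
Proof.
move=> inj_f hf Qe hx; rewrite (monalgE x); apply: ideal_gen_sum => r rx.
have /hasP [u ur hu] : has h (pverts (val r)).
  by apply/negPn/negP => /hx/eqP; rewrite mcoeff_eq0 rx.
have [r1 [r2 [end1 ->]]] := malgU_split_at (x@_r) ur.
have <- : mulq << x@_r *g r1 >> (\sum_i vertex (f i)) = << x@_r *g r1 >>.
  by apply: mulqU_vertex_sum; rewrite // end1 hf.
exact: ideal_gen_mulq.
Qed.

Lemma size_pmap_insub (s : seq (V * seq E)) :
  all (is_qpath src tgt) s -> size (pmap insub s : seq P) = size s.
Proof. by move=> s_path; rewrite size_pmap_sub; apply/eqP; rewrite -all_count. Qed.

Lemma quot_dim_paths (U W : M -> Prop) (L : seq P) :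
  uniq L -> (forall p, p \in L -> U << p >>) ->
  (forall w, W w -> forall p, p \in L -> w@_p = 0) ->
  (forall u, U u -> W (u - \sum_(p <- L) << u@_p *g p >>)) ->
  quot_dim U W (size L).
Proof.
move=> uL LU W0 LW; set b := tnth (in_tuple L).
have inj_b : injective b by apply/tuple_uniqP.
exists (fun i => << b i >>); split; [|split].
- by move=> i; apply/LU/mem_tnth.
- move=> c Wc j; have := W0 _ Wc (b j) (mem_tnth _ _).
  rewrite raddf_sum (bigD1 j) //= big1 => [|i ne]; rewrite mcoeffZ mcoeffU.
    by rewrite eqxx mulr1 addr0.
  by rewrite (inj_eq inj_b) (negbTE ne) mulr0.
- move=> u Uu; exists (fun i => u@_(b i)).
  suff -> : \sum_i u@_(b i) *: << b i >> = \sum_(p <- L) << u@_p *g p >>.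
    exact: LW.
  by rewrite [RHS]big_tnth; apply: eq_bigr => i _; rewrite malgZU.
Qed.

End PathAlgebra.

Section StretchedQuiver.
Variables (V E : finType) (src tgt : E -> V) (n : nat) (F : fieldType).
Local Notation SV := (sV V E n).
Local Notation SE := (sE E n).
Local Notation ss := (@ssrc V E src n).
Local Notation st := (@stgt V E tgt n).
Local Notation P := (qpath ss st).
Local Notation M := (KQ ss st F).
Local Notation eps := (eps src tgt n F).
Local Notation theta := (@theta V E src tgt n F).

Definition old_vertex (v : SV) : bool := if v is inl _ then true else false.

Definition on_arrow (a : E) (v : SV) : bool :=
  if v is inr (b, _) then b == a else false.

(* In the paper's numbering, [inner_path b k l] is the path
   w_(k+1) b_(k+2) ... b_(k+l+1) inside the stretched arrow b. *)
Definition inner_path (b : E) (k : 'I_n) (l : nat) : SV * seq SE :=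
  (inr (b, k), [seq (b, inord j) | j <- iota k.+1 l]).

Definition inner (x : SV * seq SE) : bool := ~~ has old_vertex (pverts st x).

Lemma ssrc_lift b (k : 'I_n) : ss (b, lift ord0 k) = inr (b, k).
Proof. by rewrite /ssrc /= liftK. Qed.

Lemma stgt_lift b (k : 'I_n) (k1 : (k.+1 < n)%N) :
  st (b, lift ord0 k) = inr (b, Ordinal k1).
Proof.
have -> : lift ord0 k = lift ord_max (Ordinal k1) :> 'I_n.+1.
  by apply: ord_inj; rewrite lift0 lift_max.
by rewrite /stgt /= liftK.
Qed.

Lemma inord_lift0 (k : 'I_n) : inord k.+1 = lift ord0 k :> 'I_n.+1.
Proof. by apply: ord_inj; rewrite lift0 inordK // ltnS ltn_ord. Qed.

Lemma inner_path_on_arrow b (k : 'I_n) l : (k + l < n)%N ->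
  is_qpath ss st (inner_path b k l) && all (on_arrow b) (pverts st (inner_path b k l)).
Proof.
elim: l k => [|l IH] k kl_lt; first by rewrite /= eqxx.
have k1 : (k.+1 < n)%N by lia.
have := IH (Ordinal k1) ltac:(rewrite /=; lia).
by rewrite /inner_path /pverts /= qpath_cons inord_lift0 ssrc_lift stgt_lift /= !eqxx.
Qed.

Lemma arrows_of_inner_qpath b (k : 'I_n) es :
  is_qpath ss st (inr (b, k), es) -> ~~ has old_vertex (map st es) ->
  exists l, (k + l < n)%N /\ es = [seq (b, inord j) | j <- iota k.+1 l].
Proof.
elim: es k => [|[c j] es IH] k; first by exists 0%N; rewrite addn0 ltn_ord.
rewrite qpath_cons /= => /andP [src_c es_path] /norP [tgt_c es_new].
move: src_c tgt_c es_path; rewrite /ssrc /stgt /=.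
case: unliftP => [k0 -> | ->] //= /eqP [-> ->].
case: unliftP => [k2 j_k2 | ->] //= _ es_path.
have k2_val : nat_of_ord k2 = k.+1.
  by have := congr1 (@nat_of_ord _) j_k2; rewrite lift0 lift_max.
have [l [kl_lt ->]] := IH k2 es_path es_new.
by exists l.+1; rewrite k2_val /= inord_lift0 in kl_lt *; split=> //; lia.
Qed.

Lemma inner_qpath_is_inner_path (r : P) : inner (val r) ->
  exists b (k : 'I_n) l, (k + l < n)%N /\ val r = inner_path b k l.
Proof.
case: r => [[[//|[b k]] es] hr] /norP [_ es_new] /=.
by have [l [kl_lt ->]] := arrows_of_inner_qpath hr es_new; exists b, k, l.
Qed.

Definition inner_paths (b : E) : seq (SV * seq SE) :=
  [seq inner_path b k l | k <- enum 'I_n, l <- iota 0 (n - k)].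

Definition all_inner_paths : seq (SV * seq SE) :=
  [seq x | b <- enum E, x <- inner_paths b].

Lemma inner_pathsP b x :
  reflect (exists (k : 'I_n) l, (k + l < n)%N /\ x = inner_path b k l)
          (x \in inner_paths b).
Proof.
apply: (iffP allpairsPdep) => [[k [l [_ l_lt ->]]]|[k [l [kl_lt ->]]]].
  by exists k, l; split=> //; move: l_lt; rewrite mem_iota add0n leq0n /=; lia.
by exists k, l; rewrite mem_enum mem_iota add0n leq0n /=; split=> //; lia.
Qed.

Lemma qpath_inner_paths b x : x \in inner_paths b -> is_qpath ss st x.
Proof.
by case/inner_pathsP => k [l [/(inner_path_on_arrow b) /andP [? _] ->]].
Qed.

Lemma inner_paths_inner b x : x \in inner_paths b -> inner x.
Proof.
case/inner_pathsP => k [l [/(inner_path_on_arrow b) /andP [_ on_b] ->]].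
by rewrite /inner -all_predC; apply: sub_all on_b => -[].
Qed.

Lemma uniq_inner_paths b : uniq (inner_paths b).
Proof.
apply: allpairs_uniq_dep => [||[k1 l1] [k2 l2] _ _ /= [k12 /(congr1 size)]].
- exact: enum_uniq.
- by move=> k _; apply: iota_uniq.
by rewrite !size_map !size_iota k12 => ->.
Qed.

Lemma size_inner_paths b : size (inner_paths b) = 'C(n.+1, 2).
Proof.
rewrite size_allpairs_dep sumnE big_map enumT.
rewrite -(big_mkord xpredT (fun k => size (iota 0 (n - k)))) big_nat_rev.
rewrite -bin2_sum big_nat_recl // add0n.
by apply: eq_big_nat => k /andP [_ k_lt]; rewrite size_iota; lia.
Qed.

Lemma all_inner_pathsP x :
  reflect (exists b, x \in inner_paths b) (x \in all_inner_paths).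
Proof.
apply: (iffP allpairsPdep) => [[b [y [_ y_in ->]]]|[b x_in]]; first by exists b.
by exists b, x; rewrite mem_enum.
Qed.

Lemma qpath_all_inner_paths : all (is_qpath ss st) all_inner_paths.
Proof. by apply/allP => x /all_inner_pathsP [b /qpath_inner_paths]. Qed.

Lemma on_arrow_inner_paths b x : x \in inner_paths b -> on_arrow b x.1.
Proof. by case/inner_pathsP => k [l [_ ->]] /=. Qed.

Lemma uniq_all_inner_paths : uniq all_inner_paths.
Proof.
apply: allpairs_uniq_dep => [||[b1 x1] [b2 x2]]; first exact: enum_uniq.
  by move=> b _; apply: uniq_inner_paths.
move=> /allpairsPdep [b1' [x1' [_ x1_in e1]]] /allpairsPdep [b2' [x2' [_ x2_in e2]]].
case: e1 => <- <- in x1_in; case: e2 => <- <- in x2_in => /= x12; subst x2.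
move: (on_arrow_inner_paths x1_in) (on_arrow_inner_paths x2_in).
by case: x1.1 => // -[b k] /= /eqP <- /eqP ->.
Qed.

Lemma size_all_inner_paths : size all_inner_paths = (#|E| * 'C(n.+1, 2))%N.
Proof.
rewrite size_allpairs_dep sumnE big_map enumT.
by under eq_bigr do rewrite size_inner_paths; rewrite sum_nat_const.
Qed.

Lemma inner_paths_on_arrow (r : P) a :
  inner (val r) -> has (on_arrow a) (pverts st (val r)) -> val r \in inner_paths a.
Proof.
move=> /inner_qpath_is_inner_path [b [k [l [kl_lt ->]]]] /hasP [v v_in on_a].
have /andP [_ /allP on_b] := inner_path_on_arrow b kl_lt.
have: on_arrow b v by apply: on_b.
case: v on_a {v_in on_b} => // -[c j] /= /eqP -> /eqP ->.
by apply/inner_pathsP; exists k, l.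
Qed.

Lemma all_inner_paths_inner (r : P) : inner (val r) -> val r \in all_inner_paths.
Proof.
move=> /inner_qpath_is_inner_path [b [k [l [kl_lt ->]]]].
by apply/all_inner_pathsP; exists b; apply/inner_pathsP; exists k, l.
Qed.

Definition eps_ideal (g : seq (KQ src tgt F)) : M -> Prop :=
  ideal_gen (fun x => x \in eps :: map theta g).

Definition arrow_ideal (g : seq (KQ src tgt F)) (a : E) : M -> Prop :=
  ideal_gen (fun x => x \in [seq wvert src tgt F a k | k <- enum 'I_n] ++
                            eps :: map theta g).

Lemma supp_through_eps : supp_through old_vertex eps.
Proof. by apply: supp_through_sum => v _; apply: supp_through_pb. Qed.

Lemma supp_through_theta f : supp_through old_vertex (theta f).
Proof.
by apply: supp_through_sum => p _; apply/supp_through_scale/supp_through_pb.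
Qed.

Lemma supp_through_eps_gens g x :
  x \in eps :: map theta g -> supp_through old_vertex x.
Proof.
rewrite in_cons => /orP [/eqP ->|/mapP [f _ ->]]; first exact: supp_through_eps.
exact: supp_through_theta.
Qed.

Lemma eps_idealP g w : eps_ideal g w <-> supp_through old_vertex w.
Proof.
split; first by apply: supp_through_ideal_gen => x; apply: supp_through_eps_gens.
apply: (ideal_gen_supp_through (f := inl)) => [||//]; first exact: inl_inj.
  by case=> // v _; apply: codom_f.
exact: mem_head.
Qed.

Lemma supp_through_arrow_ideal g a u :
  arrow_ideal g a u -> supp_through [predU old_vertex & on_arrow a] u.
Proof.
apply: supp_through_ideal_gen => x; rewrite mem_cat => /orP [/mapP [k _ ->]|].
  by apply: supp_through_pb; rewrite /= unfold_in /= eqxx.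
by move/supp_through_eps_gens; apply: supp_through_sub => v old_v; apply/orP; left.
Qed.

Lemma quot_dim_arrow g a : quot_dim (arrow_ideal g a) (eps_ideal g) 'C(n.+1, 2).
Proof.
set L : seq P := pmap insub (inner_paths a).
have uL : uniq L := pmap_sub_uniq _ (uniq_inner_paths a).
have <- : size L = 'C(n.+1, 2).
  by rewrite size_pmap_insub ?size_inner_paths //; apply/allP/qpath_inner_paths.
apply: quot_dim_paths => // [p|w /eps_idealP w0 p|u Uu]; last 1 first.
- apply/eps_idealP => r r_inner; rewrite mcoeffB mcoeff_sumU //.
  case: ifP => [_|r_notin]; first by rewrite subrr.
  rewrite (supp_through_arrow_ideal Uu) ?subr0 // has_predU negb_or r_inner /=.
  by apply: contraFN r_notin => on_a; rewrite mem_pmap_sub inner_paths_on_arrow.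
- rewrite mem_pmap_sub => /inner_pathsP [k [l [_ p_eq]]].
  have -> : << p >> = mulq (mulq (wvert src tgt F a k) (wvert src tgt F a k)) << p >>.
    by rewrite /wvert mulq_vertex_idem mulq_vertexU p_eq eqxx.
  by apply: ideal_gen_mulq; rewrite mem_cat map_f ?mem_enum.
- by rewrite mem_pmap_sub => /inner_paths_inner; apply: w0.
Qed.

Lemma quot_dim_total g :
  quot_dim (fun _ => True) (eps_ideal g) (#|E| * 'C(n.+1, 2)).
Proof.
set L : seq P := pmap insub all_inner_paths.
have uL : uniq L := pmap_sub_uniq _ uniq_all_inner_paths.
rewrite -size_all_inner_paths -(size_pmap_insub qpath_all_inner_paths).
apply: quot_dim_paths => // [w /eps_idealP w0 p|u _].
- by rewrite mem_pmap_sub => /all_inner_pathsP [b /inner_paths_inner]; apply: w0.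
- apply/eps_idealP => r r_inner; rewrite mcoeffB mcoeff_sumU //.
  by rewrite mem_pmap_sub all_inner_paths_inner ?subrr.
Qed.

End StretchedQuiver.

Theorem proposition2p3 (F : fieldType) (V E : finType) (src tgt : E -> V)
    (g : seq (KQ src tgt F)) (A : nat) :
  (1 <= A)%N ->
  (forall x, x \in g -> uniform x) ->
  minimal_gens g ->
  admissible (ideal_gen (fun x => x \in g)) ->
  (exists d, quot_dim (fun _ => True) (ideal_gen (fun x => x \in g)) d) ->
  (* generators of I~_A + <eps>, lifted to F Q~_A *)
  let gt := [seq @theta V E src tgt A.-1 F x | x <- g] in
  let eps_ideal := ideal_gen (fun x => x \in eps src tgt A.-1 F :: gt) in
  (forall alpha : E,
     quot_dim
       (ideal_gen (fun x =>
          x \in [seq wvert src tgt F alpha k | k <- enum 'I_A.-1] ++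
                eps src tgt A.-1 F :: gt))
       eps_ideal
       (A * (A - 1) %/ 2)) /\
  quot_dim (fun _ => True) eps_ideal (#|E| * (A * (A - 1) %/ 2)).
Proof.
(* Only the shape [theta g] of the generators matters, not the hypotheses on g. *)
move=> A_gt0 _ _ _ _ /=.
have -> : (A * (A - 1) %/ 2 = 'C(A.-1.+1, 2))%N by rewrite prednK // bin2 divn2 subn1.
by split=> [alpha|]; [apply: quot_dim_arrow | apply: quot_dim_total].
Qed.
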